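(* Let $(n_1,\dots,n_K)$ be a multinomial random variable with parameters $n\ge1$ and $(p_1,\dots,p_K)$. For any $\delta>0$, $$\Pr\Big(\sum_{i=1}^Kp_i^2>\sum_{i=1}^K\Big(\frac{n_i}{n}\Big)^2+2\sqrt{\frac2n\ln\frac K\delta}\Big)<\delta.$$ *)

From HB Require Import structures.
From mathcomp Require Import all_boot all_order all_algebra.
From mathcomp Require Import all_classical all_reals exp.
Set Implicit Arguments. Unset Strict Implicit. Unset Printing Implicit Defensive.
Import Order.TTheory GRing.Theory Num.Theory.
Local Open Scope ring_scope.

(* Outcomes of a multinomial random variable with n trials and K categories:
   count vectors (n_1,...,n_K) with 0 <= n_i <= n (those with sum <> n have
   probability 0). *)
Definition counts (K n : nat) := {ffun 'I_K -> 'I_n.+1}.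

Definition prob_vector (R : realType) (K : nat) (p : 'I_K -> R) : Prop :=
  (forall i, 0 <= p i) /\ \sum_(i < K) p i = 1.

Definition multinomial_pmf (R : realType) (K n : nat) (p : 'I_K -> R)
    (c : counts K n) : R :=
  if (\sum_(i < K) (c i : nat))%N == n then
    (n`!)%:R / (\prod_(i < K) ((c i : nat)`!))%:R * \prod_(i < K) p i ^+ (c i : nat)
  else 0.

Definition multinomial_prob (R : realType) (K n : nat) (p : 'I_K -> R)
    (E : counts K n -> bool) : R :=
  \sum_(c : counts K n | E c) multinomial_pmf p c.

(* Put X = sum_i p_i n_i.  Since sum_i (n_i/n - p_i)^2 >= 0, the event forces
   X < n (sum_i p_i^2 - s), where s is the square-root term.  The multinomial
   theorem gives E exp(-lam X) = (sum_i p_i exp(-lam p_i))^n, and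
   exp(-y) <= 1 - y + y^2/2 bounds this by exp(n (lam^2/2 - lam sum_i p_i^2)).
   Markov's inequality with lam = s yields the tail bound exp(-n s^2/2), which
   is delta/K for the s of the statement. *)
From HB Require Import structures.
From mathcomp Require Import all_boot all_order all_algebra.
From mathcomp Require Import all_classical all_reals exp.
From mathcomp Require Import all_analysis.
Import numFieldNormedType.Exports.
From mathcomp Require Import ring lra.
Import Order.TTheory GRing.Theory Num.Theory.
Local Open Scope ring_scope.

Set Implicit Arguments. Unset Strict Implicit. Unset Printing Implicit Defensive.

Section ExpBounds.
Variable R : realType.
Implicit Types x y : R.

Lemma expR_ge1DxDx2 x : 0 <= x -> 1 + x + x ^+ 2 / 2 <= expR x.
Proof.
move=> x_ge0; rewrite /expR.
pose f (i : nat) : R := (i == 0)%:R + x *+ (i == 1) + x ^+ 2 / 2 *+ (i == 2).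
have sum_f m : (2 < m)%N -> \sum_(0 <= i < m) f i = 1 + x + x ^+ 2 / 2.
  move=> m_gt2; rewrite (@big_cat_nat _ _ _ 3) //= !big_nat_recl // big_geq //.
  rewrite big_nat_cond big1 ?addr0; first by rewrite /f /= !mulr1n !mulr0n; ring.
  move=> i /andP[/andP[i_gt2 _] _].
  by rewrite /f !gtn_eqF // ?(ltn_trans _ i_gt2) // mulr0n !addr0.
rewrite [leLHS](_ : _ = limn (series f)); last first.
  by apply/esym/(@lim_near_cst R^o) => //; near=> k; apply: sum_f; near: k.
apply: ler_lim; first by apply: is_cvg_near_cst; near=> k; apply: sum_f; near: k.
  exact: is_cvg_series_exp_coeff.
near=> k; apply: ler_sum => -[|[|[|i]]] _; rewrite /f /exp_coeff /=.
- by rewrite !(mulr0n, expr0, addr0, divr1, mulr1n).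
- by rewrite !(mulr0n, expr1, addr0, add0r, divr1, mulr1n).
- by rewrite !(mulr0n, addr0, add0r, mulr1n).
- by rewrite !mulr0n !addr0 divr_ge0 // exprn_ge0.
Unshelve. all: by end_near. Qed.

Lemma expRN_le1BxDx2 y : 0 <= y -> expR (- y) <= 1 - y + y ^+ 2 / 2.
Proof.
move=> y_ge0; have taylor := expR_ge1DxDx2 y_ge0.
have pos : 0 < 1 + y + y ^+ 2 / 2 by have := sqr_ge0 y; lra.
rewrite expRN (le_trans (_ : _ <= (1 + y + y ^+ 2 / 2)^-1)) //.
  by rewrite lef_pV2 // posrE expR_gt0.
rewrite -div1r ler_pdivrMr // -subr_ge0.
have -> : (1 - y + y ^+ 2 / 2) * (1 + y + y ^+ 2 / 2) - 1 = (y ^+ 2) ^+ 2 / 4.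
  by field.
by rewrite divr_ge0 // exprn_ge0 // sqr_ge0.
Qed.

End ExpBounds.

Section MultinomialTheorem.
Variable R : numFieldType.
Variables K N : nat.
Implicit Types (a : 'I_K -> R) (c d : counts K N) (j : 'I_K).

Definition count_size c : nat := (\sum_i (c i : nat))%N.

Definition multinomial_coef m c : R :=
  (m`!)%:R / (\prod_i ((c i : nat)`!))%:R.

Definition count_incr j c : counts K N := [ffun i => inord (c i + (i == j))].
Definition count_decr j c : counts K N := [ffun i => inord (c i - (i == j))].

Lemma count_incrE j c i : (c j < N)%N -> count_incr j c i = (c i + (i == j))%N :> nat.
Proof.
move=> cj_ltN; rewrite ffunE inordK //.
by have [->|_] := eqVneq i j; rewrite ?addn1 ?addn0.
Qed.

Lemma count_decrE j c i : count_decr j c i = (c i - (i == j))%N :> nat.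
Proof. by rewrite ffunE inordK // ltnS (leq_trans (leq_subr _ _)) // -ltnS. Qed.

Lemma count_incr_overflow j c : (N <= c j)%N -> count_incr j c j = ord0.
Proof.
by move=> N_le_cj; rewrite ffunE eqxx /inord /insubd insubN // -leqNgt addn1 ltnS.
Qed.

Lemma count_incrK j c : (c j < N)%N -> count_decr j (count_incr j c) = c.
Proof.
by move=> cj_ltN; apply/ffunP => i; apply/val_inj; rewrite /= count_decrE count_incrE ?addnK.
Qed.

Lemma count_decrK j d : (0 < d j)%N -> count_incr j (count_decr j d) = d.
Proof.
move=> dj_gt0; have dj_le : (count_decr j d j < N)%N.
  by rewrite count_decrE eqxx subn1 -ltnS prednK.
apply/ffunP => i; apply/val_inj; rewrite /= count_incrE // count_decrE.
by have [->|_] := eqVneq i j; rewrite ?subn1 ?addn1 ?prednK ?subn0 ?addn0.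
Qed.

Lemma indicator_sum j : (\sum_i ((i == j) : nat))%N = 1%N.
Proof. by rewrite (bigD1 j) //= eqxx big1 // => i /negbTE ->. Qed.

Lemma count_size_incr j c : (c j < N)%N -> count_size (count_incr j c) = (count_size c).+1.
Proof.
move=> cj_ltN; rewrite /count_size (eq_bigr _ (fun i _ => count_incrE i cj_ltN)).
by rewrite big_split /= indicator_sum addn1.
Qed.

Lemma count_le_size j c : (c j <= count_size c)%N.
Proof. by rewrite /count_size (bigD1 j) //= leq_addr. Qed.

Lemma monomial_count_incr a j c : (c j < N)%N ->
  \prod_i a i ^+ count_incr j c i = a j * \prod_i a i ^+ c i.
Proof.
move=> cj_ltN; under eq_bigr do rewrite count_incrE // exprD.
rewrite big_split /= mulrC; congr (_ * _).
by rewrite (bigD1 j) //= eqxx expr1 big1 ?mulr1 // => i /negbTE ->.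
Qed.

Lemma count_fact_incr j c : (c j < N)%N ->
  (\prod_i (count_incr j c i)`! = (\prod_i (c i)`!) * (c j).+1)%N.
Proof.
move=> cj_ltN; rewrite (bigD1 j) //= [in RHS](bigD1 j) //= count_incrE // eqxx addn1 factS.
rewrite (eq_bigr (fun i => (c i)`!)) 1?[RHS]mulnC ?mulnA //.
by move=> i /negbTE ij; rewrite count_incrE // ij addn0.
Qed.

Lemma count_fact_gt0 c : (0 < \prod_i (c i)`!)%N.
Proof. by rewrite prodn_gt0 // => i; rewrite fact_gt0. Qed.

Lemma multinomial_coefS m d : count_size d = m.+1 ->
  \sum_j (d j : nat)%:R * multinomial_coef m d = multinomial_coef m.+1 d :> R.
Proof.
by move=> dsize; rewrite -mulr_suml -natr_sum -/(count_size d) dsize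
  /multinomial_coef factS natrM mulrA.
Qed.

Lemma multinomial_expansion a m : (m <= N)%N ->
  (\sum_i a i) ^+ m =
  \sum_(c | count_size c == m) multinomial_coef m c * \prod_i a i ^+ c i.
Proof.
elim: m => [_|m IH m_ltN].
  pose c0 : counts K N := [ffun => ord0].
  rewrite expr0 (big_pred1 c0); last first.
    move=> c; rewrite /count_size sum_nat_eq0 /=; apply/forallP/eqP => [c_eq0|->].
      by apply/ffunP => i; rewrite ffunE; apply/val_inj/eqP/c_eq0.
    by move=> i; rewrite ffunE.
  rewrite /multinomial_coef !big1 ?divr1 ?mulr1 // => i _; rewrite ffunE ?expr0 //.
rewrite exprS IH ?(ltnW m_ltN) // mulr_suml.
under eq_bigr => j _ do rewrite mulr_sumr.
transitivity (\sum_j \sum_(d | count_size d == m.+1)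
   (d j : nat)%:R * multinomial_coef m d * \prod_i a i ^+ d i); last first.
  rewrite exchange_big; apply: eq_bigr => d dsize.
  by rewrite -mulr_suml multinomial_coefS //; apply/eqP.
(* The j-th summand is reindexed by c |-> c + e_j; the d with d_j = 0 vanish. *)
apply: eq_bigr => j _.
rewrite [RHS](bigID (fun d => 0 < d j)%N) /= [X in _ = _ + X]big1 ?addr0; last first.
  by move=> d /andP[_]; rewrite -eqn0Ngt => /eqP->; rewrite !mul0r.
rewrite [RHS](reindex_onto (count_incr j) (count_decr j)) /=; last first.
  by move=> d /andP[_]; apply: count_decrK.
apply: eq_big => [c|c csize].
  have [cj_ltN|N_le_cj] := ltnP (c j) N.
    by rewrite count_size_incr // count_incrE // count_incrK // !eqxx addn1 !andbT.
  rewrite count_incr_overflow //= andbF; apply/negbTE.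
  by rewrite neq_ltn (leq_trans m_ltN (leq_trans N_le_cj (count_le_size j c))) orbT.
have cj_ltN : (c j < N)%N by apply: leq_ltn_trans m_ltN; rewrite -(eqP csize) count_le_size.
rewrite monomial_count_incr // /multinomial_coef count_fact_incr // count_incrE //.
rewrite eqxx addn1 natrM.
have fact_neq0 : (\prod_i (c i)`!)%:R != 0 :> R by rewrite pnatr_eq0 -lt0n count_fact_gt0.
by field; rewrite fact_neq0 addrC natr1 pnatr_eq0.
Qed.

End MultinomialTheorem.

Lemma multinomial_pgf (R : realType) (K n : nat) (p a : 'I_K -> R) :
  \sum_(c : counts K n) multinomial_pmf p c * \prod_i a i ^+ c i =
  (\sum_i p i * a i) ^+ n.
Proof.
rewrite (multinomial_expansion _ (leqnn n)) [RHS]big_mkcond /=.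
apply: eq_bigr => c _; rewrite /multinomial_pmf -/(count_size c).
case: ifP => _; last by rewrite mul0r.
by under [in RHS]eq_bigr do rewrite exprMn; rewrite big_split /= mulrA.
Qed.

Lemma inner_lt_of_sqnorm_gap (R : realFieldType) (K : nat) (p q : 'I_K -> R) (s : R) :
  \sum_i q i ^+ 2 + 2 * s < \sum_i p i ^+ 2 ->
  \sum_i p i * q i < \sum_i p i ^+ 2 - s.
Proof.
move=> gap; have : 0 <= \sum_i (q i - p i) ^+ 2 by apply: sumr_ge0 => i _; apply: sqr_ge0.
have -> : \sum_i (q i - p i) ^+ 2 =
    \sum_i q i ^+ 2 - 2 * \sum_i p i * q i + \sum_i p i ^+ 2.
  by rewrite mulr_sumr -sumrB -big_split /=; apply: eq_bigr => i _; ring.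
lra.
Qed.

Section MultinomialTail.
Variable R : realType.
Variables (K n : nat) (p : 'I_K -> R).
Hypothesis n_gt0 : (0 < n)%N.
Hypothesis p_prob : prob_vector p.

Local Notation sqnorm := (\sum_(i < K) p i ^+ 2).
Local Notation event s := (fun c : counts K n =>
  sqnorm > \sum_(i < K) ((c i : nat)%:R / n%:R) ^+ 2 + 2 * s).

Lemma prob_vector_le1 i : p i <= 1.
Proof.
case: p_prob => p_ge0 <-; rewrite (bigD1 i) //= lerDl.
by apply: sumr_ge0 => j _; apply: p_ge0.
Qed.

Lemma multinomial_pmf_ge0 (c : counts K n) : 0 <= multinomial_pmf p c.
Proof.
case: p_prob => p_ge0 _; rewrite /multinomial_pmf; case: ifP => // _.
by rewrite mulr_ge0 ?divr_ge0 // prodr_ge0 // => i _; rewrite exprn_ge0.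
Qed.

Lemma event_weighted_count_lt s (c : counts K n) : event s c ->
  \sum_i p i * (c i : nat)%:R < n%:R * (sqnorm - s).
Proof.
move=> /inner_lt_of_sqnorm_gap lt_s; have n_pos : 0 < n%:R :> R by rewrite ltr0n.
rewrite -ltr_pdivrMl // mulr_sumr (le_lt_trans _ lt_s) //.
by rewrite le_eqVlt; apply/orP; left; apply/eqP/eq_bigr => i _; rewrite mulrCA [_^-1 * _]mulrC.
Qed.

Lemma categorical_mgf_le lam : 0 <= lam ->
  \sum_i p i * expR (- lam * p i) <= expR (lam ^+ 2 / 2 - lam * sqnorm).
Proof.
move=> lam_ge0; case: p_prob => p_ge0 p_sum1.
apply: le_trans (expR_ge1Dx _).
apply: (le_trans (y := \sum_i (p i - lam * p i ^+ 2 + lam ^+ 2 / 2 * p i))).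
  apply: ler_sum => i _; have pi_ge0 := p_ge0 i; have pi_le1 := prob_vector_le1 i.
  rewrite mulNr (le_trans (ler_wpM2l pi_ge0 (expRN_le1BxDx2 (mulr_ge0 lam_ge0 pi_ge0)))) //.
  (* p^3 <= p on [0, 1] *)
  have : 0 <= lam ^+ 2 * (p i - p i ^+ 3) by rewrite mulr_ge0 ?sqr_ge0 //; nra.
  rewrite !exprS expr0; nra.
rewrite !big_split /= sumrN -!mulr_sumr p_sum1 mulr1; lra.
Qed.

Lemma multinomial_mgf_le lam : 0 <= lam ->
  \sum_(c : counts K n) multinomial_pmf p c * expR (- lam * \sum_i p i * (c i : nat)%:R)
  <= expR (n%:R * (lam ^+ 2 / 2 - lam * sqnorm)).
Proof.
move=> lam_ge0; case: p_prob => p_ge0 _.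
under eq_bigr => c _.
  rewrite mulr_sumr expR_sum (eq_bigr (fun i => expR (- lam * p i) ^+ c i)); last first.
    by move=> i _; rewrite -expRM_natl; congr expR; ring.
  over.
rewrite multinomial_pgf expRM_natl lerXn2r ?nnegrE ?expR_ge0 ?categorical_mgf_le //.
by rewrite sumr_ge0 // => i _; rewrite mulr_ge0 ?expR_ge0.
Qed.

Lemma multinomial_sqnorm_chernoff s lam : 0 <= lam ->
  multinomial_prob p (event s) <= expR (n%:R * (lam ^+ 2 / 2 - lam * s)).
Proof.
move=> lam_ge0; pose X (c : counts K n) := \sum_i p i * (c i : nat)%:R.
(* Markov: on the event, exp(lam (n (sqnorm - s) - X)) >= 1. *)
apply: (le_trans (y := \sum_(c : counts K n)
    multinomial_pmf p c * expR (lam * (n%:R * (sqnorm - s)) + - lam * X c))).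
  rewrite /multinomial_prob big_mkcond /=; apply: ler_sum => c _.
  case: ifP => [/event_weighted_count_lt X_lt|_]; last first.
    by rewrite mulr_ge0 ?multinomial_pmf_ge0 ?expR_ge0.
  rewrite -[leLHS]mulr1 ler_wpM2l ?multinomial_pmf_ge0 // -[leLHS]expR0 ler_expR.
  by rewrite mulNr -mulrBr mulr_ge0 // subr_ge0 ltW.
under eq_bigr do rewrite expRD mulrCA.
rewrite -mulr_sumr (le_trans (ler_wpM2l (expR_ge0 _) (multinomial_mgf_le lam_ge0))) //.
by rewrite -expRD ler_expR le_eqVlt; apply/orP; left; apply/eqP; ring.
Qed.

Lemma multinomial_sqnorm_tail s : 0 <= s ->
  multinomial_prob p (event s) <= expR (- (n%:R * s ^+ 2 / 2)).
Proof.
move=> s_ge0; have -> : - (n%:R * s ^+ 2 / 2) = n%:R * (s ^+ 2 / 2 - s * s) by field.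
exact: multinomial_sqnorm_chernoff.
Qed.

End MultinomialTail.

Lemma multinomial_sqnorm_gap_single (R : realType) (n : nat) (p : 'I_1 -> R) (s : R) :
  (0 < n)%N -> prob_vector p -> 0 <= s ->
  multinomial_prob p (fun c : counts 1 n =>
    \sum_(i < 1) p i ^+ 2 > \sum_(i < 1) ((c i : nat)%:R / n%:R) ^+ 2 + 2 * s) = 0.
Proof.
move=> n_gt0 [_] p_sum1 s_ge0; rewrite /multinomial_prob big1 // => c.
rewrite /multinomial_pmf !big_ord1 in p_sum1 *; case: eqP => // ->.
by rewrite p_sum1 divff ?pnatr_eq0 -?lt0n // expr1n; lra.
Qed.

Theorem lemma8 (R : realType) (K n : nat) (p : 'I_K -> R) (delta : R) :
  (1 <= n)%N -> prob_vector p -> 0 < delta ->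
  multinomial_prob p
    (fun c : counts K n =>
       \sum_(i < K) (p i) ^+ 2 >
       \sum_(i < K) ((c i : nat)%:R / n%:R) ^+ 2
         + 2 * Num.sqrt (2 / n%:R * ln (K%:R / delta)))
  < delta.
Proof.
move=> n_gt0 p_prob delta_gt0.
have tail := multinomial_sqnorm_tail n_gt0 p_prob
  (sqrtr_ge0 (2 / n%:R * ln (K%:R / delta))).
have [delta_gt1|delta_le1] := ltrP 1 delta.
  apply: le_lt_trans tail (le_lt_trans _ delta_gt1).
  by rewrite expR_le1 oppr_le0 !mulr_ge0 ?sqr_ge0.
case: K p p_prob tail => [|[|K]] p p_prob tail.
- by case: p_prob => _; rewrite big_ord0 => /eqP; rewrite eq_sym oner_eq0.
- by rewrite multinomial_sqnorm_gap_single ?sqrtr_ge0.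
set L := ln _ in tail *.
have L_gt0 : 0 < L.
  by rewrite /L ln_gt0 // ltr_pdivlMr // mul1r (le_lt_trans delta_le1) // ltr1n.
have s2 : Num.sqrt (2 / n%:R * L) ^+ 2 = 2 / n%:R * L.
  by rewrite sqr_sqrtr // mulr_ge0 ?divr_ge0 ?ler0n ?(ltW L_gt0).
apply: le_lt_trans tail _.
rewrite s2 (_ : _ * _ / 2 = L); last by field; rewrite pnatr_eq0 -lt0n.
rewrite expRN lnK ?posrE ?divr_gt0 ?ltr0n // invf_div ltr_pdivrMr ?ltr0n //.
by rewrite ltr_pMr // ltr1n.
Qed.
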